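(* Let $a < b$ be real, $\mathcal{P} = [a,b]$, and let $A_1, A_2 \in \mathbb{R}^{n\times n}$, $B \in \mathbb{R}^{n \times n_i}$, $C \in \mathbb{R}^{n_o \times n}$ define the full-order output $y(\mathsf{p}) = C(A_1 + \mathsf{p}A_2)^{-1}B$, and suppose $y(\mathsf{p}) = \Phi_0 + \sum_{i=1}^{n} \frac{\Phi_i}{\mathsf{p} - \nu_i}$ with constant matrices $\Phi_0, \Phi_i \in \mathbb{R}^{n_o\times n_i}$ and pairwise distinct poles $\nu_i \in \mathbb{R} \setminus [a,b]$. For real matrices $\hat{A}_1, \hat{A}_2 \in \mathbb{R}^{r\times r}$, $\hat{B} \in \mathbb{R}^{r \times n_i}$, $\hat{C} \in \mathbb{R}^{n_o \times r}$ define the reduced output $\hat{y}(\mathsf{p}) = \hat{C}(\hat{A}_1 + \mathsf{p}\hat{A}_2)^{-1}\hat{B}$, and suppose $\hat{y}(\mathsf{p}) = \sum_{j=1}^{r} \frac{c_j b_j^{T}}{\mathsf{p} - \lambda_j}$ with $c_j \in \mathbb{R}^{n_o}$, $b_j \in \mathbb{R}^{n_i}$ and pairwise distinct $\lambda_j \in \mathbb{R} \setminus [a,b]$. For $\sigma \in \mathbb{R}\setminus\{a,b\}$ define $f_\sigma\colon \mathbb{R}\setminus\{a,b\} \to \mathbb{R}$ by \[ f_\sigma(\mathsf{p}) = \begin{cases} \left( \ln\left|\frac{\mathsf{p} - b}{\mathsf{p} - a}\right| - \ln\left|\frac{\sigma - b}{\sigma - a}\right| \right) \frac{1}{\mathsf{p}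 - \sigma}, & \mathsf{p} \neq \sigma,\\[1ex] \frac{b - a}{(\sigma - a)(\sigma - b)}, & \mathsf{p} = \sigma, \end{cases} \] and define $Y, \hat{Y}$ on $\mathbb{R}\setminus\{a,b\}$ by \[ Y(\mathsf{p}) = \ln\left|\frac{\mathsf{p} - b}{\mathsf{p} - a}\right| \Phi_0 + \sum_{i=1}^{n} f_{\nu_i}(\mathsf{p}) \Phi_i, \qquad \hat{Y}(\mathsf{p}) = \sum_{j=1}^{r} f_{\lambda_j}(\mathsf{p}) c_j b_j^{T}. \] If $\hat{y}$ is an $\mathcal{L}_2$-optimal structured approximation of $y$, then for $k = 1,\dots,r$: \[ Y(\lambda_k) b_k = \hat{Y}(\lambda_k) b_k, \qquad c_k^{T} Y(\lambda_k) = c_k^{T} \hat{Y}(\lambda_k), \qquad c_k^{T} Y'(\lambda_k) b_k = c_k^{T} \hat{Y}'(\lambda_k) b_k. \]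
   Context: ''$\hat{y}$ is an $\mathcal{L}_2$-optimal structured approximation of $y$'' means that the real matrices $(\hat{A}_1, \hat{A}_2, \hat{B}, \hat{C})$ minimize $\int_a^b \|y(\mathsf{p}) - \hat{y}(\mathsf{p})\|_F^2 \, d\mathsf{p}$ over all reduced models of the form $\hat{C}(\hat{A}_1 + \mathsf{p}\hat{A}_2)^{-1}\hat{B}$ of fixed order $r$. The pole-residue form of $\hat{y}$ arises when $\hat{A}_2$ is invertible and $\hat{A}_2^{-1}\hat{A}_1$ has $r$ distinct real eigenvalues (the poles being the $\lambda_j$). $\|\cdot\|_F$ is the Frobenius norm; $Y'$ and $\hat{Y}'$ denote derivatives with respect to $\mathsf{p}$ (both functions are continuously differentiable). *)

From HB Require Import structures.
From mathcomp Require Import all_boot all_order all_algebra.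
From mathcomp Require Import all_classical all_reals all_analysis.
Set Implicit Arguments. Unset Strict Implicit. Unset Printing Implicit Defensive.
Import Order.TTheory GRing.Theory Num.Theory.
Import numFieldNormedType.Exports.
Local Open Scope classical_set_scope.
Local Open Scope ring_scope.

Section Defs.
Variable R : realType.

Definition frob2 (m n : nat) (M : 'M[R]_(m, n)) : R :=
  \sum_(i < m) \sum_(j < n) (M i j) ^+ 2.

Definition sout (N ni no : nat) (A1 A2 : 'M[R]_N) (B : 'M[R]_(N, ni))
  (C : 'M[R]_(no, N)) (p : R) : 'M[R]_(no, ni) :=
  C *m invmx (A1 + p *: A2) *m B.

Definition L2err (a b : R) (ni no : nat) (y yh : R -> 'M[R]_(no, ni)) : \bar R :=
  (\int[lebesgue_measure]_(p in `[a, b]) (frob2 (y p - yh p))%:E)%E.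

Definition L2_optimal (a b : R) (ni no r : nat) (y : R -> 'M[R]_(no, ni))
  (Ah1 Ah2 : 'M[R]_r) (Bh : 'M[R]_(r, ni)) (Ch : 'M[R]_(no, r)) : Prop :=
  forall (A1' A2' : 'M[R]_r) (B' : 'M[R]_(r, ni)) (C' : 'M[R]_(no, r)),
    (forall p, a <= p <= b -> A1' + p *: A2' \in unitmx) ->
    (L2err a b y (sout Ah1 Ah2 Bh Ch) <= L2err a b y (sout A1' A2' B' C'))%E.

Definition logratio (a b p : R) : R := ln `|(p - b) / (p - a)|.

Definition fsig (a b s p : R) : R :=
  if p == s then (b - a) / ((s - a) * (s - b))
  else (logratio a b p - logratio a b s) / (p - s).

Definition Yfull (a b : R) (n ni no : nat) (Phi0 : 'M[R]_(no, ni))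
  (Phi : 'I_n -> 'M[R]_(no, ni)) (nu : 'I_n -> R) (p : R) : 'M[R]_(no, ni) :=
  logratio a b p *: Phi0 + \sum_(i < n) fsig a b (nu i) p *: Phi i.

Definition Yred (a b : R) (r ni no : nat) (lam : 'I_r -> R)
  (c : 'I_r -> 'cV[R]_no) (bv : 'I_r -> 'cV[R]_ni) (p : R) : 'M[R]_(no, ni) :=
  \sum_(j < r) fsig a b (lam j) p *: (c j *m (bv j)^T).

End Defs.

From HB Require Import structures.
From mathcomp Require Import all_boot all_order all_algebra.
From mathcomp Require Import all_classical all_reals all_analysis.
From mathcomp Require Import ring lra.
Import Order.TTheory GRing.Theory Num.Theory.
Import numFieldNormedType.Exports.
Local Open Scope classical_set_scope.
Local Open Scope ring_scope.
Set Implicit Arguments. Unset Strict Implicit.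

(* If the optimal model has pole-residue form sum_j (p - lam_j)^-1 c_j b_j^T, it also
   minimises the error among all such sums with real poles off [a, b], since each of them
   is realised by the diagonal pencil diag(-lam) + p I.  With E = y - yhat, perturbing c_k
   or b_k linearly, and lam_k by a small shift (which changes the model by
   t (q - lam_k - t)^-1 (q - lam_k)^-1 c_k b_k^T), the first-order optimality conditions
   say that int (q - lam_k)^-1 E(q) b_k, c_k^T int (q - lam_k)^-1 E(q) and
   c_k^T int (q - lam_k)^-2 E(q) b_k vanish.  Finally Y and Yhat are the Cauchy transforms
   p |-> int_a^b (q - p)^-1 y(q) dq of y and yhat (this is where ln|(p - b)/(p - a)| and
   f_sigma come from), and differentiating under the integral sign gives
   Y'(p) = int_a^b (q - p)^-2 y(q) dq. *)

Section QuadraticPerturbation.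
Variable R : realFieldType.

Lemma norm_le_small_eq0 (x M d : R) : 0 < d ->
  (forall s, 0 < s <= d -> `|x| <= s * M) -> x = 0.
Proof.
move=> d0 small; apply/eqP/negPn/negP => x0.
have M0 : 0 <= M.
  by rewrite -(pmulr_rge0 _ d0); apply: le_trans (small d _); rewrite ?d0 ?lexx.
have M1 : 0 < M + 1 by rewrite ltr_pwDr.
pose s := Num.min d (`|x| / (M + 1)).
have : `|x| <= s * M by apply: small; rewrite lt_min d0 divr_gt0 ?normr_gt0 //= ge_min lexx.
apply/negP; rewrite -ltNge; apply: (le_lt_trans (y := `|x| / (M + 1) * M)).
  by apply: ler_wpM2r => //; rewrite ge_min lexx orbT.
by rewrite mulrAC ltr_pdivrMr // ltr_pM2l ?normr_gt0 // ltrDl.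
Qed.

(* First-order optimality: [J] and [Q] are the linear and quadratic coefficients of the
   change of the squared error along a perturbation of size [t]. *)
Lemma quadratic_perturbation_eq0 (J0 K C d : R) : 0 < d ->
  (forall t, 0 < `|t| <= d -> exists J Q,
     2 * t * J <= t ^+ 2 * Q /\ Q <= K /\ `|J - J0| <= `|t| * C) ->
  J0 = 0.
Proof.
move=> d0 pert; apply: (@norm_le_small_eq0 _ (K / 2 + C) d) => // s /andP[s0 sd].
have /pert [J1 [Q1 [q1 [Q1K J1C]]]] : 0 < `|s| <= d by rewrite gtr0_norm // s0 sd.
have /pert [J2 [Q2 [q2 [Q2K J2C]]]] : 0 < `|- s| <= d by rewrite normrN gtr0_norm // s0 sd.
rewrite [`|s|]gtr0_norm // in J1C; rewrite normrN [`|s|]gtr0_norm // in J2C.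
have sQ1 : s ^+ 2 * Q1 <= s ^+ 2 * K by rewrite ler_wpM2l ?sqr_ge0.
have sQ2 : s ^+ 2 * Q2 <= s ^+ 2 * K by rewrite ler_wpM2l ?sqr_ge0.
rewrite sqrrN in q2.
have h1 : 2 * J1 <= s * K by nra.
have h2 : - (2 * J2) <= s * K by nra.
move: J1C J2C; rewrite !ler_norml => /andP[lo1 hi1] /andP[lo2 hi2].
by apply/andP; split; lra.
Qed.

End QuadraticPerturbation.

Section FrobeniusInner.
Variable R : comPzRingType.

Definition frob_inner m n (X Y : 'M[R]_(m, n)) : R :=
  \sum_(i < m) \sum_(j < n) X i j * Y i j.

Lemma frob_innerZr m n (X Y : 'M[R]_(m, n)) s :
  frob_inner X (s *: Y) = s * frob_inner X Y.
Proof.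
rewrite /frob_inner mulr_sumr; apply: eq_bigr => i _; rewrite mulr_sumr.
by apply: eq_bigr => j _; rewrite mxE mulrCA.
Qed.

Lemma mx_form_sum m n (u : 'cV[R]_m) (X : 'M[R]_(m, n)) (w : 'cV[R]_n) :
  (u^T *m X *m w) 0 0 = \sum_(i < m) \sum_(j < n) u i 0 * X i j * w j 0.
Proof.
rewrite mxE; under eq_bigr do rewrite mxE mulr_suml.
by rewrite exchange_big; apply: eq_bigr => i _; apply: eq_bigr => j _; rewrite mxE.
Qed.

Lemma frob_inner_outer m n (X : 'M[R]_(m, n)) (u : 'cV[R]_m) (w : 'cV[R]_n) :
  frob_inner X (u *m w^T) = (u^T *m X *m w) 0 0.
Proof.
rewrite mx_form_sum; apply: eq_bigr => i _; apply: eq_bigr => j _.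
by rewrite !mxE big_ord1 mxE; ring.
Qed.

Lemma mulmx_cV_eq0 m n (M : 'M[R]_(m, n)) (w : 'cV[R]_n) :
  (forall u : 'cV[R]_m, (u^T *m M *m w) 0 0 = 0) -> M *m w = 0.
Proof.
move=> form0; apply/matrixP => i j; rewrite [j]ord1 !mxE.
by have := form0 (delta_mx i 0); rewrite trmx_delta -mulmxA -rowE !mxE.
Qed.

Lemma mulmx_rV_eq0 m n (u : 'cV[R]_m) (M : 'M[R]_(m, n)) :
  (forall w : 'cV[R]_n, (u^T *m M *m w) 0 0 = 0) -> u^T *m M = 0.
Proof.
move=> form0; apply/matrixP => i j; rewrite [i]ord1 !mxE.
by have := form0 (delta_mx j 0); rewrite -colE !mxE.
Qed.

End FrobeniusInner.

Section Frobenius.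
Variable R : realType.

Lemma frob2_ge0 m n (X : 'M[R]_(m, n)) : 0 <= frob2 X.
Proof. by apply: sumr_ge0 => i _; apply: sumr_ge0 => j _; apply: sqr_ge0. Qed.

Lemma frob2Z m n s (X : 'M[R]_(m, n)) : frob2 (s *: X) = s ^+ 2 * frob2 X.
Proof.
rewrite /frob2 mulr_sumr; apply: eq_bigr => i _; rewrite mulr_sumr.
by apply: eq_bigr => j _; rewrite mxE exprMn.
Qed.

Lemma frob2_subZ m n (X D : 'M[R]_(m, n)) t :
  frob2 (X - t *: D) = frob2 X - 2 * t * frob_inner X D + t ^+ 2 * frob2 D.
Proof.
rewrite /frob2 /frob_inner !mulr_sumr -sumrB -big_split /=; apply: eq_bigr => i _.
rewrite !mulr_sumr -sumrB -big_split /=; apply: eq_bigr => j _.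
by rewrite !mxE; ring.
Qed.

End Frobenius.

Lemma pole_residue_realization (R : realType) r ni no (lam : 'I_r -> R)
    (c : 'I_r -> 'cV[R]_no) (bv : 'I_r -> 'cV[R]_ni) p :
  (forall j, p - lam j != 0) ->
  diag_mx (\row_j (- lam j)) + p *: 1%:M \in unitmx /\
  sout (diag_mx (\row_j (- lam j))) 1%:M (\matrix_(j, t) bv j t 0)
    (\matrix_(s, j) c j s 0) p = \sum_(j < r) (p - lam j)^-1 *: (c j *m (bv j)^T).
Proof.
move=> p_lam; rewrite /sout.
have -> : diag_mx (\row_j (- lam j)) + p *: 1%:M = diag_mx (\row_j (p - lam j)).
  apply/matrixP => i j; rewrite !mxE; case: eqP => [->|_] /=.
    by rewrite mulr1 addrC.
  by rewrite mulr0 addr0.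
pose N := diag_mx (\row_j (p - lam j)^-1).
have DN : diag_mx (\row_j (p - lam j)) *m N = 1%:M.
  apply/matrixP => i j; rewrite mul_diag_mx !mxE; case: eqP => [->|_] /=.
    by rewrite mulr1n mulfV.
  by rewrite mulr0n mulr0.
have [unitD _] := mulmx1_unit DN.
have -> : invmx (diag_mx (\row_j (p - lam j))) = N.
  by rewrite -[LHS]mulmx1 -DN mulmxA mulVmx // mul1mx.
split => //; rewrite /N mul_mx_diag; apply/matrixP => s t.
rewrite !mxE summxE; apply: eq_bigr => j _; rewrite !mxE big_ord1 !mxE; ring.
Qed.

Lemma cvg_is_derive (R : numFieldType) (V : normedModType R) (f : R -> V) (x : R) (L : V) :
  (fun h => h^-1 *: ((f \o shift x) (h *: 1) - f x)) @ 0^' --> L -> is_derive x 1 f L.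
Proof.
by move=> cv; apply: DeriveDef; [apply/cvg_ex; exists L | exact: cvg_lim].
Qed.

Lemma is_deriveZl (R : numFieldType) (V : normedModType R) (g : R -> R) (x dg : R) (v : V) :
  is_derive x 1 g dg -> is_derive x 1 (fun p => g p *: v) (dg *: v).
Proof.
case=> dgx <-; apply: cvg_is_derive.
have -> : (fun h : R => h^-1 *: (((fun p => g p *: v) \o shift x) (h *: 1) - g x *: v)) =
    (fun h : R => (h^-1 *: ((g \o shift x) (h *: 1) - g x)) *: v).
  by apply/funext => h; rewrite /= -scalerBl scalerA.
exact: cvgZr_tmp.
Qed.

Lemma is_derive_mx (R : realType) m n (F : R -> 'M[R]_(m, n)) (D : 'M[R]_(m, n)) (x : R) :
  (forall i j, is_derive x 1 (fun p => F p i j) (D i j)) -> is_derive x 1 F D.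
Proof.
move=> dF; have -> : F = \sum_(i < m) \sum_(j < n) (fun p => F p i j *: delta_mx i j).
  apply/funext => p; rewrite [LHS]matrix_sum_delta fct_sumE.
  by apply: eq_bigr => i _; rewrite fct_sumE.
rewrite [D]matrix_sum_delta; apply: is_derive_sum => i; apply: is_derive_sum => j.
exact: is_deriveZl.
Qed.

Section Segment.
Variables (R : realType) (a b : R).
Hypothesis ab : a < b.
Local Notation mu := (@lebesgue_measure R).

Definition ab_continuous (f : R -> R) := forall x, a <= x <= b -> {for x, continuous f}.

Definition Iab (f : R -> R) : R := \int[mu]_(x in `[a, b]) f x.

Lemma in_ab x : (x \in `[a, b]%classic) = (a <= x <= b).
Proof. by apply/idP/idP; rewrite ?in_setE /= in_itv. Qed.

Lemma ab_continuous_integrable f : ab_continuous f -> mu.-integrable `[a, b] (EFin \o f).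
Proof.
move=> cf; apply: continuous_compact_integrable; first exact: segment_compact.
by apply: continuous_in_subspaceT => x; rewrite in_ab => /cf.
Qed.

Lemma ab_continuous_cst k : ab_continuous (fun _ => k).
Proof. by move=> x _; apply: cvg_cst. Qed.

Lemma ab_continuousD f g : ab_continuous f -> ab_continuous g ->
  ab_continuous (fun x => f x + g x).
Proof. by move=> cf cg x xab; apply: continuousD; [exact: cf|exact: cg]. Qed.

Lemma ab_continuousB f g : ab_continuous f -> ab_continuous g ->
  ab_continuous (fun x => f x - g x).
Proof. by move=> cf cg x xab; apply: continuousB; [exact: cf|exact: cg]. Qed.

Lemma ab_continuousM f g : ab_continuous f -> ab_continuous g ->
  ab_continuous (fun x => f x * g x).
Proof. by move=> cf cg x xab; apply: continuousM; [exact: cf|exact: cg]. Qed.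

Lemma ab_continuous_norm f : ab_continuous f -> ab_continuous (fun x => `|f x|).
Proof. by move=> cf x xab; apply: cvg_norm; exact: cf. Qed.

Lemma ab_continuous_sum k (F : 'I_k -> R -> R) : (forall i, ab_continuous (F i)) ->
  ab_continuous (fun x => \sum_(i < k) F i x).
Proof.
elim: k F => [|k IH] F cF.
  by under eq_fun do rewrite big_ord0; exact: ab_continuous_cst.
under eq_fun do rewrite big_ord_recr /=.
by apply: ab_continuousD; [apply: (IH (fun i => F (widen_ord _ i)))|].
Qed.

Create HintDb ab_continuity discriminated.
#[local] Hint Opaque ab_continuous : ab_continuity.
#[local] Hint Resolve ab_continuous_cst ab_continuousD ab_continuousB ab_continuousM
  ab_continuous_norm ab_continuous_sum : ab_continuity.
Ltac ab_continuity := auto 10 with ab_continuity.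

Lemma eq_Iab f g : (forall x, a <= x <= b -> f x = g x) -> Iab f = Iab g.
Proof. by move=> fg; apply: eq_Rintegral => x; rewrite in_ab => /fg. Qed.

Lemma IabD f g : ab_continuous f -> ab_continuous g ->
  Iab (fun x => f x + g x) = Iab f + Iab g.
Proof. by move=> cf cg; apply: RintegralD => //; apply: ab_continuous_integrable. Qed.

Lemma IabB f g : ab_continuous f -> ab_continuous g ->
  Iab (fun x => f x - g x) = Iab f - Iab g.
Proof. by move=> cf cg; apply: RintegralB => //; apply: ab_continuous_integrable. Qed.

Lemma IabZl k f : ab_continuous f -> Iab (fun x => k * f x) = k * Iab f.
Proof. by move=> cf; apply: RintegralZl => //; apply: ab_continuous_integrable. Qed.

Lemma IabZr k f : ab_continuous f -> Iab (fun x => f x * k) = Iab f * k.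
Proof. by move=> cf; apply: RintegralZr => //; apply: ab_continuous_integrable. Qed.

Lemma Iab_sum k (F : 'I_k -> R -> R) : (forall i, ab_continuous (F i)) ->
  Iab (fun x => \sum_(i < k) F i x) = \sum_(i < k) Iab (F i).
Proof.
elim: k F => [|k IH] F cF.
  by under eq_Iab do rewrite big_ord0; rewrite big_ord0 /Iab Rintegral_cst //= mul0r.
under eq_Iab do rewrite big_ord_recr /=.
rewrite big_ord_recr /= IabD ?(IH (fun i => F (widen_ord _ i))) //.
by apply: ab_continuous_sum => i.
Qed.

Lemma ler_Iab f g : ab_continuous f -> ab_continuous g ->
  (forall x, a <= x <= b -> f x <= g x) -> Iab f <= Iab g.
Proof.
by move=> cf cg fg; apply: le_Rintegral; rewrite ?ab_continuous_integrable.
Qed.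

Lemma ler_norm_Iab f : ab_continuous f -> `|Iab f| <= Iab (fun x => `|f x|).
Proof. by move=> cf; apply: le_normr_Rintegral => //; apply: ab_continuous_integrable. Qed.

Lemma Iab_ge0 f : (forall x, a <= x <= b -> 0 <= f x) -> 0 <= Iab f.
Proof.
by move=> f0; apply: Rintegral_ge0 => x xab; apply: f0; rewrite -in_ab; exact/mem_set.
Qed.

Lemma Iab_FTC (F f : R -> R) : (forall x, a <= x <= b -> is_derive x 1 F (f x)) ->
  ab_continuous f -> Iab f = F b - F a.
Proof.
move=> dF cf; have cF x : a <= x <= b -> {for x, continuous F}.
  move=> /dF [dx _]; apply: differentiable_continuous; exact/derivable1_diffP.
rewrite /Iab /Rintegral (@continuous_FTC2 _ f F) //.
- by apply: continuous_in_subspaceT => x; rewrite in_ab => /cf.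
- split.
  + by move=> x; rewrite in_itv /= => /andP[ax xb]; case: (dF x); rewrite ?ltW.
  + by apply: cvg_at_right_filter; apply: cF; rewrite lexx ltW.
  + by apply: cvg_at_left_filter; apply: cF; rewrite lexx ltW.
- by move=> x; rewrite in_itv /= derive1E => /andP[ax xb]; case: (dF x); rewrite ?ltW.
Qed.

Definition mx_ab_continuous m n (F : R -> 'M[R]_(m, n)) :=
  forall i j, ab_continuous (fun q => F q i j).

Lemma mx_ab_continuousB m n (F G : R -> 'M[R]_(m, n)) :
  mx_ab_continuous F -> mx_ab_continuous G -> mx_ab_continuous (fun q => F q - G q).
Proof.
move=> cF cG i j; under eq_fun do rewrite !mxE.
exact: ab_continuousB.
Qed.

Lemma mx_ab_continuousZ m n (g : R -> R) (F : R -> 'M[R]_(m, n)) :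
  ab_continuous g -> mx_ab_continuous F -> mx_ab_continuous (fun q => g q *: F q).
Proof.
move=> cg cF i j; under eq_fun do rewrite mxE.
exact: ab_continuousM.
Qed.

Lemma ab_continuous_frob_inner m n (F G : R -> 'M[R]_(m, n)) :
  mx_ab_continuous F -> mx_ab_continuous G -> ab_continuous (fun q => frob_inner (F q) (G q)).
Proof.
move=> cF cG; do 2![apply: ab_continuous_sum => ?].
exact: ab_continuousM.
Qed.

Lemma ab_continuous_frob2 m n (F : R -> 'M[R]_(m, n)) :
  mx_ab_continuous F -> ab_continuous (fun q => frob2 (F q)).
Proof.
move=> cF; do 2![apply: ab_continuous_sum => ?].
under eq_fun do rewrite expr2.
exact: ab_continuousM.
Qed.

Lemma Iab_frob2_subZ m n (F D : R -> 'M[R]_(m, n)) t :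
  mx_ab_continuous F -> mx_ab_continuous D ->
  Iab (fun q => frob2 (F q - t *: D q)) =
  Iab (fun q => frob2 (F q)) - 2 * t * Iab (fun q => frob_inner (F q) (D q)) +
  t ^+ 2 * Iab (fun q => frob2 (D q)).
Proof.
move=> cF cD; under eq_Iab do rewrite frob2_subZ.
have cF2 := ab_continuous_frob2 cF; have cD2 := ab_continuous_frob2 cD.
have cFD := ab_continuous_frob_inner cF cD.
by rewrite IabD ?IabB ?IabZl //; ab_continuity.
Qed.

Lemma L2err_Iab ni no (y yh G : R -> 'M[R]_(no, ni)) : mx_ab_continuous G ->
  (forall p, a <= p <= b -> y p - yh p = G p) ->
  L2err a b y yh = (Iab (fun q => frob2 (G q)))%:E.
Proof.
move=> cG yG; rewrite /L2err.
under eq_integral => q /[1!in_ab] /yG -> do [].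
rewrite /Iab /Rintegral fineK //.
exact: integrable_fin_num (ab_continuous_integrable (ab_continuous_frob2 cG)).
Qed.

Definition outside (l : R) := ~~ (a <= l <= b).

Definition gap (l : R) := if l < a then a - l else l - b.

Lemma outsideP l : outside l -> l < a \/ b < l.
Proof. by rewrite /outside negb_and -!ltNge => /orP. Qed.

Lemma gap_gt0 l : outside l -> 0 < gap l.
Proof. by move=> /outsideP; rewrite /gap; case: ifP => la []; lra. Qed.

Lemma gap_le_dist l q : outside l -> a <= q <= b -> gap l <= `|q - l|.
Proof.
move=> /outsideP ol /andP[aq qb]; rewrite /gap; case: ifP => la.
  by rewrite ger0_norm; lra.
by rewrite ltr0_norm; case: ol; lra.
Qed.

Lemma half_gap_le_dist_shift l t q : outside l -> `|t| <= gap l / 2 -> a <= q <= b ->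
  gap l / 2 <= `|q - (l + t)|.
Proof.
move=> ol tl qab; have := gap_le_dist ol qab.
have : `|q - l| <= `|q - (l + t)| + `|t|.
  by rewrite (_ : q - l = q - (l + t) + t) ?ler_normD //; ring.
lra.
Qed.

Lemma outside_shift l t : outside l -> `|t| <= gap l / 2 -> outside (l + t).
Proof.
move=> ol tl; apply/negP => /(half_gap_le_dist_shift ol tl).
by rewrite subrr normr0; have := gap_gt0 ol; lra.
Qed.

Lemma subr_outside_neq0 l q : outside l -> a <= q <= b -> q - l != 0.
Proof. by move=> ol qab; rewrite -normr_gt0 (lt_le_trans (gap_gt0 ol) (gap_le_dist ol qab)). Qed.

Lemma norm_inv_sub_le l q : outside l -> a <= q <= b -> `|(q - l)^-1| <= (gap l)^-1.
Proof.
move=> ol qab; rewrite normfV lef_pV2 ?posrE ?gap_gt0 ?gap_le_dist //.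
by rewrite normr_gt0 subr_outside_neq0.
Qed.

Lemma norm_inv_shift_le l t q : outside l -> `|t| <= gap l / 2 -> a <= q <= b ->
  `|(q - (l + t))^-1| <= 2 / gap l.
Proof.
move=> ol tl qab; have g0 := gap_gt0 ol.
rewrite normfV -invf_div lef_pV2 ?posrE ?divr_gt0 ?half_gap_le_dist_shift //.
by rewrite normr_gt0 subr_outside_neq0 ?outside_shift.
Qed.

Lemma norm_inv_shift_subM_le l t q : outside l -> `|t| <= gap l / 2 -> a <= q <= b ->
  `|(q - (l + t))^-1 * (q - l)^-1| <= 2 / gap l * (gap l)^-1.
Proof.
by move=> ol tl qab; rewrite normrM ler_pM ?norm_inv_shift_le ?norm_inv_sub_le.
Qed.

Lemma near_outside l : outside l -> \forall p \near l, outside p.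
Proof.
move=> ol; have g0 : 0 < gap l / 2 by rewrite divr_gt0 ?gap_gt0.
near=> p; rewrite -(subrKC l p); apply: (outside_shift ol); rewrite distrC.
by near: p; exact: cvgr_dist_le id l cvg_id _ g0.
Unshelve. all: by end_near.
Qed.

Lemma ab_continuous_inv_sub l : outside l -> ab_continuous (fun q => (q - l)^-1).
Proof.
move=> ol x xab; apply: continuousV; first exact: subr_outside_neq0.
by apply: continuousB; [exact: cvg_id|exact: cvg_cst].
Qed.
#[local] Hint Resolve ab_continuous_inv_sub : ab_continuity.

Lemma is_derive_scale_sub (s l x : R) : is_derive x 1 (fun q => s * (q - l)) s.
Proof.
have -> : (fun q => s * (q - l)) = s \*: (id - cst l) by apply/funext.
by apply: is_derive_eq; rewrite subr0 [_ *: _]mulr1.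
Qed.

Lemma Iab_inv_sub l : outside l -> Iab (fun q => (q - l)^-1) = logratio a b l.
Proof.
move=> ol; have al : a - l != 0 by rewrite subr_outside_neq0 // lexx ltW.
have ratio_gt0 q : a <= q <= b -> 0 < (a - l)^-1 * (q - l).
  move=> /andP[aq qb]; rewrite mulrC; case: (outsideP ol) => lo.
    by rewrite divr_gt0 // subr_gt0 // (lt_le_trans lo aq).
  by rewrite -divrNN !opprB divr_gt0 // subr_gt0 ?(le_lt_trans qb lo) ?(lt_trans ab lo).
have dF x : a <= x <= b -> is_derive x 1 (fun q => ln ((a - l)^-1 * (q - l))) (x - l)^-1.
  move=> xab; apply: (is_derive_eq (@is_derive1_comp _ (@ln R) (fun q => (a - l)^-1 * (q - l))
    x _ _ (is_derive1_ln (ratio_gt0 x xab)) (is_derive_scale_sub _ l x))).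
  by field; rewrite al subr_outside_neq0.
rewrite (Iab_FTC dF (ab_continuous_inv_sub ol)) mulVf // ln1 subr0 /logratio.
have -> : (l - b) / (l - a) = (a - l)^-1 * (b - l) by rewrite -divrNN !opprB mulrC.
by rewrite ger0_norm // ltW // ratio_gt0 // lexx ltW.
Qed.

Lemma Iab_inv_subM l s : outside l -> outside s ->
  Iab (fun q => (q - l)^-1 * (q - s)^-1) = fsig a b s l.
Proof.
move=> ol os; rewrite /fsig; case: eqP => [<-|ls].
  have dF x : a <= x <= b ->
      is_derive x 1 (fun q => (-1 * (q - l))^-1) ((x - l)^-1 * (x - l)^-1).
    move=> xab; have xl : -1 * (x - l) != 0 by rewrite mulN1r oppr_eq0 subr_outside_neq0.
    apply: (is_derive_eq (is_deriveV (f := fun q => -1 * (q - l)) xl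
      (is_derive_scale_sub _ l x))).
    by rewrite [_ *: _]mulrN1 opprK mulN1r sqrrN expr2 invfM.
  rewrite (Iab_FTC dF); last by ab_continuity.
  have al : a - l != 0 by rewrite subr_outside_neq0 // lexx ltW.
  have bl : b - l != 0 by rewrite subr_outside_neq0 // lexx ltW.
  by field; rewrite -[l - a]opprB -[l - b]opprB !oppr_eq0 al bl.
have ls0 : l - s != 0 by rewrite subr_eq0; apply/eqP.
rewrite (eq_Iab (g := fun q => (l - s)^-1 * ((q - l)^-1 - (q - s)^-1))); last first.
  by move=> q qab; field; rewrite ls0 !subr_outside_neq0.
by rewrite IabZl ?IabB ?Iab_inv_sub 1?mulrC //; ab_continuity.
Qed.

Definition cauchy_tr (phi : R -> R) (p : R) : R := Iab (fun q => (q - p)^-1 * phi q).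

Lemma cauchy_tr_pole_residue k (alpha0 : R) (pole : 'I_k -> R) (alpha : 'I_k -> R) p :
  (forall i, outside (pole i)) -> outside p ->
  cauchy_tr (fun q => alpha0 + \sum_(i < k) (q - pole i)^-1 * alpha i) p =
  logratio a b p * alpha0 + \sum_(i < k) fsig a b (pole i) p * alpha i.
Proof.
move=> pole_out op; rewrite /cauchy_tr (eq_Iab (g := fun q => (q - p)^-1 * alpha0 +
    \sum_(i < k) ((q - p)^-1 * (q - pole i)^-1) * alpha i)); last first.
  by move=> q _; rewrite mulrDr mulr_sumr; congr (_ + _); apply: eq_bigr => i _; rewrite mulrA.
rewrite IabD ?IabZr ?Iab_sum ?Iab_inv_sub //; try by ab_continuity.
congr (_ + _); apply: eq_bigr => i _; rewrite IabZr ?Iab_inv_subM //; by ab_continuity.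
Qed.

Lemma cauchy_tr_shiftB phi l t : ab_continuous phi -> outside l -> `|t| <= gap l / 2 ->
  cauchy_tr phi (l + t) - cauchy_tr phi l = t * cauchy_tr (fun q => (q - l)^-1 * phi q) (l + t).
Proof.
move=> cphi ol tl; have olt := outside_shift ol tl.
rewrite /cauchy_tr -IabB -?IabZl; try by ab_continuity.
apply: eq_Iab => q qab.
by field; rewrite (subr_outside_neq0 ol qab) (subr_outside_neq0 olt qab).
Qed.

Lemma norm_cauchy_tr_shift_le phi l t : ab_continuous phi -> outside l ->
  `|t| <= gap l / 2 -> `|cauchy_tr phi (l + t)| <= 2 / gap l * Iab (fun q => `|phi q|).
Proof.
move=> cphi ol tl; have olt := outside_shift ol tl.
rewrite -IabZl; last by ab_continuity.
apply: le_trans (ler_norm_Iab _) _; first by ab_continuity.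
apply: ler_Iab => [||q qab]; try by ab_continuity.
by rewrite normrM ler_wpM2r // norm_inv_shift_le.
Qed.

Lemma cauchy_tr_lipschitz phi l t : ab_continuous phi -> outside l -> `|t| <= gap l / 2 ->
  `|cauchy_tr phi (l + t) - cauchy_tr phi l| <=
  `|t| * (2 / gap l * Iab (fun q => `|(q - l)^-1 * phi q|)).
Proof.
move=> cphi ol tl; rewrite cauchy_tr_shiftB // normrM ler_wpM2l //.
by apply: norm_cauchy_tr_shift_le => //; ab_continuity.
Qed.

Lemma is_derive_cauchy_tr phi l : ab_continuous phi -> outside l ->
  is_derive l 1 (cauchy_tr phi) (cauchy_tr (fun q => (q - l)^-1 * phi q) l).
Proof.
move=> cphi ol; set psi := fun q => _ * _.
have cpsi : ab_continuous psi by rewrite /psi; ab_continuity.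
have g0 : 0 < gap l / 2 by rewrite divr_gt0 ?gap_gt0.
set C := 2 / gap l * Iab (fun q => `|(q - l)^-1 * psi q|).
have C0 : 0 <= C.
  by apply: mulr_ge0; [rewrite divr_ge0 // ltW // gap_gt0 | apply: Iab_ge0].
have C1 : 0 < C + 1 by rewrite ltr_pwDr.
have quotient h : h != 0 -> `|h| <= gap l / 2 ->
    h^-1 *: ((cauchy_tr phi \o shift l) (h *: 1) - cauchy_tr phi l) = cauchy_tr psi (l + h).
  move=> h0 hl; rewrite /= [h *: 1]mulr1 [h + l]addrC cauchy_tr_shiftB //.
  by rewrite [_ *: _]mulKf.
(* The difference quotient at [h] is [cauchy_tr psi (l + h)], which is Lipschitz in [h]. *)
apply: cvg_is_derive; apply/cvgrPdist_le => e e0.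
have eC : 0 < e / (C + 1) by rewrite divr_gt0.
near=> h.
have h0 : h != 0 by near: h; exact: nbhs_dnbhs_neq.
have hg : `|h| <= gap l / 2 by near: h; exact: dnbhs0_le.
have he : `|h| <= e / (C + 1) by near: h; exact: dnbhs0_le.
rewrite quotient // distrC; apply: le_trans (cauchy_tr_lipschitz cpsi ol hg) _.
apply: le_trans (ler_wpM2r C0 he) _.
by rewrite mulrAC ler_pdivrMr // ler_pM2l // lerDl.
Unshelve. all: by end_near.
Qed.

Definition mx_cauchy_tr m n (F : R -> 'M[R]_(m, n)) (p : R) : 'M[R]_(m, n) :=
  \matrix_(i, j) cauchy_tr (fun q => F q i j) p.

Lemma mx_cauchy_trB m n (F G : R -> 'M[R]_(m, n)) p :
  mx_ab_continuous F -> mx_ab_continuous G -> outside p ->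
  mx_cauchy_tr (fun q => F q - G q) p = mx_cauchy_tr F p - mx_cauchy_tr G p.
Proof.
move=> cF cG op; apply/matrixP => i j; rewrite !mxE /cauchy_tr -IabB; try by ab_continuity.
by apply: eq_Iab => q _; rewrite !mxE mulrBr.
Qed.

Lemma mx_cauchy_tr_form m n (F : R -> 'M[R]_(m, n)) (u : 'cV[R]_m) (w : 'cV[R]_n) p :
  mx_ab_continuous F -> outside p ->
  (u^T *m mx_cauchy_tr F p *m w) 0 0 = Iab (fun q => (q - p)^-1 * (u^T *m F q *m w) 0 0).
Proof.
move=> cF op; rewrite mx_form_sum (eq_Iab (g := fun q => \sum_(i < m) \sum_(j < n)
    u i 0 * w j 0 * ((q - p)^-1 * F q i j))); last first.
  move=> q _; rewrite mx_form_sum mulr_sumr; apply: eq_bigr => i _.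
  by rewrite mulr_sumr; apply: eq_bigr => j _; ring.
rewrite Iab_sum; last by move=> i; ab_continuity.
apply: eq_bigr => i _; rewrite Iab_sum; last by move=> j; ab_continuity.
by apply: eq_bigr => j _; rewrite IabZl ?mxE /cauchy_tr; [ring | ab_continuity].
Qed.

Lemma ab_continuous_mx_form m n (F : R -> 'M[R]_(m, n)) (u : 'cV[R]_m) (w : 'cV[R]_n) :
  mx_ab_continuous F -> ab_continuous (fun q => (u^T *m F q *m w) 0 0).
Proof.
move=> cF; have cFij i j : ab_continuous (fun q => F q i j) := cF i j.
rewrite (_ : (fun q => _) = fun q => \sum_(i < m) \sum_(j < n) u i 0 * F q i j * w j 0).
  by ab_continuity.
by apply/funext => q; rewrite mx_form_sum.
Qed.

Lemma derive1_mx_cauchy_tr m n (F : R -> 'M[R]_(m, n)) (G : R -> 'M[R]_(m, n)) l :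
  mx_ab_continuous F -> outside l -> (forall p, outside p -> G p = mx_cauchy_tr F p) ->
  derive1 G l = mx_cauchy_tr (fun q => (q - l)^-1 *: F q) l.
Proof.
move=> cF ol GF; rewrite derive1E; apply: derive_val.
apply: (near_eq_is_derive (f := mx_cauchy_tr F)).
  by near=> p; rewrite GF //; near: p; exact: near_outside.
apply: is_derive_mx => i j; rewrite mxE.
under [X in cauchy_tr X]eq_fun do rewrite mxE.
under eq_fun do rewrite mxE.
exact: is_derive_cauchy_tr.
Unshelve. all: by end_near.
Qed.

Definition pole_residue m n k (M0 : 'M[R]_(m, n)) (pole : 'I_k -> R)
    (M : 'I_k -> 'M[R]_(m, n)) (q : R) : 'M[R]_(m, n) :=
  M0 + \sum_(i < k) (q - pole i)^-1 *: M i.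

Lemma pole_residue_entry m n k (M0 : 'M[R]_(m, n)) pole M q i j :
  pole_residue M0 pole M q i j = M0 i j + \sum_(s < k) (q - pole s)^-1 * M s i j.
Proof. by rewrite !mxE summxE; under eq_bigr do rewrite mxE. Qed.

Lemma mx_ab_continuous_pole_residue m n k (M0 : 'M[R]_(m, n)) pole M :
  (forall s, outside (pole s)) -> mx_ab_continuous (pole_residue (k := k) M0 pole M).
Proof.
move=> pole_out i j.
rewrite (_ : (fun q => _) = fun q => M0 i j + \sum_(s < k) (q - pole s)^-1 * M s i j).
  by ab_continuity.
by apply/funext => q; rewrite pole_residue_entry.
Qed.

Lemma mx_cauchy_tr_pole_residue m n k (M0 : 'M[R]_(m, n)) pole M p :
  (forall s, outside (pole s)) -> outside p ->
  mx_cauchy_tr (pole_residue (k := k) M0 pole M) p =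
  logratio a b p *: M0 + \sum_(s < k) fsig a b (pole s) p *: M s.
Proof.
move=> pole_out op; apply/matrixP => i j.
rewrite !mxE summxE; under eq_fun do rewrite pole_residue_entry.
rewrite cauchy_tr_pole_residue //; congr (_ + _).
by apply: eq_bigr => s _; rewrite mxE.
Qed.

Definition residue_model r ni no (lam : 'I_r -> R) (c : 'I_r -> 'cV[R]_no)
    (bv : 'I_r -> 'cV[R]_ni) : R -> 'M[R]_(no, ni) :=
  pole_residue 0 lam (fun j => c j *m (bv j)^T).

Lemma residue_model_update r ni no (lam lam' : 'I_r -> R) (c c' : 'I_r -> 'cV[R]_no)
    (bv bv' : 'I_r -> 'cV[R]_ni) k q :
  (forall j, j != k -> [/\ lam' j = lam j, c' j = c j & bv' j = bv j]) ->
  residue_model lam' c' bv' q = residue_model lam c bv q +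
    ((q - lam' k)^-1 *: (c' k *m (bv' k)^T) - (q - lam k)^-1 *: (c k *m (bv k)^T)).
Proof.
move=> same; rewrite /residue_model /pole_residue !add0r (bigD1 k) //= [in RHS](bigD1 k) //=.
rewrite (eq_bigr (fun j => (q - lam j)^-1 *: (c j *m (bv j)^T))); last first.
  by move=> j /same [-> -> ->].
by rewrite [RHS]addrC addrA subrK.
Qed.

Section L2Optimality.
Variables (n ni no r : nat) (Phi0 : 'M[R]_(no, ni)) (Phi : 'I_n -> 'M[R]_(no, ni)).
Variables (nu : 'I_n -> R) (lam : 'I_r -> R) (c : 'I_r -> 'cV[R]_no) (bv : 'I_r -> 'cV[R]_ni).
Hypotheses (nu_out : forall i, outside (nu i)) (lam_out : forall j, outside (lam j)).

Definition residue_error (lam' : 'I_r -> R) (c' : 'I_r -> 'cV[R]_no) (bv' : 'I_r -> 'cV[R]_ni) :=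
  Iab (fun q => frob2 (pole_residue Phi0 nu Phi q - residue_model lam' c' bv' q)).

Definition residual q := pole_residue Phi0 nu Phi q - residue_model lam c bv q.

Lemma mx_ab_continuous_residual : mx_ab_continuous residual.
Proof.
by apply: mx_ab_continuousB; apply: mx_ab_continuous_pole_residue.
Qed.

Lemma Yfull_cauchy p : outside p ->
  Yfull a b Phi0 Phi nu p = mx_cauchy_tr (pole_residue Phi0 nu Phi) p.
Proof. by move=> op; rewrite mx_cauchy_tr_pole_residue. Qed.

Lemma Yred_cauchy p : outside p ->
  Yred a b lam c bv p = mx_cauchy_tr (residue_model lam c bv) p.
Proof. by move=> op; rewrite mx_cauchy_tr_pole_residue // scaler0 add0r. Qed.

Lemma Y_sub_cauchy p : outside p ->
  Yfull a b Phi0 Phi nu p - Yred a b lam c bv p = mx_cauchy_tr residual p.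
Proof.
move=> op; rewrite Yfull_cauchy // Yred_cauchy // mx_cauchy_trB //;
  exact: mx_ab_continuous_pole_residue.
Qed.

Lemma derive1_Y_sub l : outside l ->
  derive1 (Yfull a b Phi0 Phi nu) l - derive1 (Yred a b lam c bv) l =
  mx_cauchy_tr (fun q => (q - l)^-1 *: residual q) l.
Proof.
move=> ol.
have cy : mx_ab_continuous (pole_residue Phi0 nu Phi) := mx_ab_continuous_pole_residue nu_out.
have cyh : mx_ab_continuous (residue_model lam c bv) := mx_ab_continuous_pole_residue lam_out.
rewrite (derive1_mx_cauchy_tr cy ol Yfull_cauchy) (derive1_mx_cauchy_tr cyh ol Yred_cauchy).
rewrite -mx_cauchy_trB //; last 2 first.
- by apply: mx_ab_continuousZ => //; exact: ab_continuous_inv_sub.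
- by apply: mx_ab_continuousZ => //; exact: ab_continuous_inv_sub.
by congr mx_cauchy_tr; apply/funext => q; rewrite scalerBr.
Qed.

Lemma residue_model_shift_c k (u : 'cV[R]_no) t q :
  residue_model lam [eta c with k |-> c k + t *: u] bv q =
  residue_model lam c bv q + t *: ((q - lam k)^-1 *: (u *m (bv k)^T)).
Proof.
rewrite (residue_model_update (lam := lam) (c := c) (bv := bv) (k := k)) => [|j jk];
  last by rewrite /= (negPf jk).
rewrite /= eqxx; congr (_ + _).
rewrite mulmxDl -scalemxAl scalerDr addrAC subrr add0r.
by rewrite !scalerA mulrC.
Qed.

Lemma residue_model_shift_b k (w : 'cV[R]_ni) t q :
  residue_model lam c [eta bv with k |-> bv k + t *: w] q =
  residue_model lam c bv q + t *: ((q - lam k)^-1 *: (c k *m w^T)).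
Proof.
rewrite (residue_model_update (lam := lam) (c := c) (bv := bv) (k := k)) => [|j jk];
  last by rewrite /= (negPf jk).
rewrite /= eqxx; congr (_ + _).
rewrite linearD linearZ /= mulmxDr -scalemxAr scalerDr addrAC subrr add0r.
by rewrite !scalerA mulrC.
Qed.

Lemma residue_model_shift_pole k t q : `|t| <= gap (lam k) / 2 -> a <= q <= b ->
  residue_model [eta lam with k |-> lam k + t] c bv q = residue_model lam c bv q +
  t *: (((q - (lam k + t))^-1 * (q - lam k)^-1) *: (c k *m (bv k)^T)).
Proof.
move=> tl qab; have ol := lam_out k; have olt := outside_shift ol tl.
rewrite (residue_model_update (lam := lam) (c := c) (bv := bv) (k := k)) => [|j jk];
  last by rewrite /= (negPf jk).
rewrite /= eqxx; congr (_ + _); rewrite scalerA -scalerBl; congr (_ *: _).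
by field; rewrite (subr_outside_neq0 ol qab) (subr_outside_neq0 olt qab).
Qed.

Lemma L2_optimal_residue_model N (A1 A2 : 'M[R]_N) (B : 'M[R]_(N, ni)) (C : 'M[R]_(no, N))
    (Ah1 Ah2 : 'M[R]_r) (Bh : 'M[R]_(r, ni)) (Ch : 'M[R]_(no, r)) :
  (forall p, a <= p <= b -> sout A1 A2 B C p = pole_residue Phi0 nu Phi p) ->
  (forall p, a <= p <= b -> sout Ah1 Ah2 Bh Ch p = residue_model lam c bv p) ->
  L2_optimal a b (sout A1 A2 B C) Ah1 Ah2 Bh Ch ->
  forall lam' c' bv', (forall j, outside (lam' j)) ->
  residue_error lam c bv <= residue_error lam' c' bv'.
Proof.
move=> y_pr yh_pr opt lam' c' bv' out'.
have realize p (pab : a <= p <= b) := pole_residue_realization c' bv'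
  (fun j => subr_outside_neq0 (out' j) pab).
have := opt _ _ (\matrix_(j, t) bv' j t 0) (\matrix_(s, j) c' j s 0)
  (fun p pab => (realize p pab).1).
rewrite (L2err_Iab mx_ab_continuous_residual); last by move=> p pab; rewrite y_pr // yh_pr.
rewrite (L2err_Iab (G := fun q => pole_residue Phi0 nu Phi q - residue_model lam' c' bv' q)).
- by rewrite lee_fin.
- by apply: mx_ab_continuousB; apply: mx_ab_continuous_pole_residue.
by move=> p pab; rewrite y_pr // (realize p pab).2 /residue_model /pole_residue add0r.
Qed.

Section FirstOrderConditions.
Hypothesis opt : forall lam' c' bv', (forall j, outside (lam' j)) ->
  residue_error lam c bv <= residue_error lam' c' bv'.

Lemma residue_error_perturb (D : R -> 'M[R]_(no, ni)) t (lam' : 'I_r -> R)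
    (c' : 'I_r -> 'cV[R]_no) (bv' : 'I_r -> 'cV[R]_ni) :
  mx_ab_continuous D -> (forall j, outside (lam' j)) ->
  (forall q, a <= q <= b -> residue_model lam' c' bv' q = residue_model lam c bv q + t *: D q) ->
  2 * t * Iab (fun q => frob_inner (residual q) (D q)) <= t ^+ 2 * Iab (fun q => frob2 (D q)).
Proof.
move=> cD out' model_eq; have := opt c' bv' out'.
rewrite /residue_error (eq_Iab (f := fun q => frob2 (_ - residue_model lam' c' bv' q))
  (g := fun q => frob2 (residual q - t *: D q))); last first.
  by move=> q qab; rewrite model_eq // opprD addrA.
rewrite Iab_frob2_subZ //; last exact: mx_ab_continuous_residual.
rewrite -/(residual _); lra.
Qed.

Lemma linear_perturbation_orth (D : R -> 'M[R]_(no, ni)) :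
  mx_ab_continuous D ->
  (forall t, exists (lam' : 'I_r -> R) (c' : 'I_r -> 'cV[R]_no) (bv' : 'I_r -> 'cV[R]_ni),
     (forall j, outside (lam' j)) /\
     forall q, a <= q <= b ->
       residue_model lam' c' bv' q = residue_model lam c bv q + t *: D q) ->
  Iab (fun q => frob_inner (residual q) (D q)) = 0.
Proof.
move=> cD realizable.
apply: (@quadratic_perturbation_eq0 _ _ (Iab (fun q => frob2 (D q))) 0 1) => // t _.
have [lam' [c' [bv' [out' model_eq]]]] := realizable t.
exists (Iab (fun q => frob_inner (residual q) (D q))), (Iab (fun q => frob2 (D q))).
rewrite subrr normr0 mulr0; split => //; exact: residue_error_perturb model_eq.
Qed.

Lemma mx_ab_continuous_rank1 (g : R -> R) (u : 'cV[R]_no) (w : 'cV[R]_ni) :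
  ab_continuous g -> mx_ab_continuous (fun q => g q *: (u *m w^T)).
Proof. by move=> cg; apply: mx_ab_continuousZ => // i j; exact: ab_continuous_cst. Qed.

Lemma residual_cauchy_mulmx k : mx_cauchy_tr residual (lam k) *m bv k = 0.
Proof.
have ol := lam_out k; have cinv := ab_continuous_inv_sub ol.
apply: mulmx_cV_eq0 => u; rewrite mx_cauchy_tr_form //; last exact: mx_ab_continuous_residual.
rewrite -[RHS](@linear_perturbation_orth (fun q => (q - lam k)^-1 *: (u *m (bv k)^T))).
- by apply: eq_Iab => q _; rewrite frob_innerZr frob_inner_outer.
- exact: mx_ab_continuous_rank1.
move=> t; exists lam, [eta c with k |-> c k + t *: u], bv.
by split=> // q _; exact: residue_model_shift_c.
Qed.

Lemma residual_cauchy_trmx k : (c k)^T *m mx_cauchy_tr residual (lam k) = 0.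
Proof.
have ol := lam_out k; have cinv := ab_continuous_inv_sub ol.
apply: mulmx_rV_eq0 => w; rewrite mx_cauchy_tr_form //; last exact: mx_ab_continuous_residual.
rewrite -[RHS](@linear_perturbation_orth (fun q => (q - lam k)^-1 *: (c k *m w^T))).
- by apply: eq_Iab => q _; rewrite frob_innerZr frob_inner_outer.
- exact: mx_ab_continuous_rank1.
move=> t; exists lam, c, [eta bv with k |-> bv k + t *: w].
by split=> // q _; exact: residue_model_shift_b.
Qed.

Lemma residual_cauchy2_form k :
  (c k)^T *m mx_cauchy_tr (fun q => (q - lam k)^-1 *: residual q) (lam k) *m bv k = 0.
Proof.
set l := lam k; set N := c k *m (bv k)^T; have ol : outside l := lam_out k.
have g0 := gap_gt0 ol; have cinv := ab_continuous_inv_sub ol.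
have cres := mx_ab_continuous_residual.
pose form q := ((c k)^T *m residual q *m bv k) 0 0.
have cform : ab_continuous form := ab_continuous_mx_form (u := c k) (w := bv k) cres.
pose psi q := (q - l)^-1 * form q.
have cpsi : ab_continuous psi by rewrite /psi; ab_continuity.
apply/matrixP => i0 j0; rewrite [i0]ord1 [j0]ord1 [RHS]mxE mx_cauchy_tr_form //; last first.
  by apply: mx_ab_continuousZ.
rewrite (eq_Iab (g := fun q => (q - l)^-1 * psi q)); last first.
  by move=> q _; rewrite -scalemxAr -scalemxAl mxE.
rewrite -/(cauchy_tr psi l).
set K := Iab (fun _ => (2 / gap l * (gap l)^-1) ^+ 2 * frob2 N).
set C := 2 / gap l * Iab (fun q => `|(q - l)^-1 * psi q|).
apply: (@quadratic_perturbation_eq0 _ _ K C (gap l / 2)) => [|t /andP[t0 tl]].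
  by rewrite divr_gt0.
have olt := outside_shift ol tl.
pose D q := ((q - (l + t))^-1 * (q - l)^-1) *: N.
have cD : mx_ab_continuous D by apply: mx_ab_continuous_rank1; ab_continuity.
exists (cauchy_tr psi (l + t)), (Iab (fun q => frob2 (D q))); split; [|split].
- have -> : cauchy_tr psi (l + t) = Iab (fun q => frob_inner (residual q) (D q)).
    by apply: eq_Iab => q _; rewrite frob_innerZr frob_inner_outer /psi mulrA.
  apply: (residue_error_perturb (lam' := [eta lam with k |-> l + t]) (c' := c) (bv' := bv)) => //.
    by move=> j /=; case: eqP => _; [exact: olt | exact: lam_out].
  by move=> q qab; exact: residue_model_shift_pole.
- apply: ler_Iab => [||q qab]; [exact: ab_continuous_frob2 | exact: ab_continuous_cst |].
  rewrite /D frob2Z ler_wpM2r ?frob2_ge0 //.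
  have := norm_inv_shift_subM_le ol tl qab; set s := _ * _ => s_le.
  rewrite -real_normK ?num_real // expr2 [X in _ <= X]expr2.
  by apply: ler_pM => //; apply: le_trans s_le.
- exact: cauchy_tr_lipschitz.
Qed.

End FirstOrderConditions.
End L2Optimality.

End Segment.

Unset Implicit Arguments. Set Strict Implicit.

Theorem theorem5p1 (R : realType) (a b : R) (n ni no r : nat)
  (A1 A2 : 'M[R]_n) (B : 'M[R]_(n, ni)) (C : 'M[R]_(no, n))
  (Phi0 : 'M[R]_(no, ni)) (Phi : 'I_n -> 'M[R]_(no, ni)) (nu : 'I_n -> R)
  (Ah1 Ah2 : 'M[R]_r) (Bh : 'M[R]_(r, ni)) (Ch : 'M[R]_(no, r))
  (lam : 'I_r -> R) (c : 'I_r -> 'cV[R]_no) (bv : 'I_r -> 'cV[R]_ni) :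
  a < b ->
  injective nu -> (forall i, ~~ (a <= nu i <= b)) ->
  (forall p, a <= p <= b ->
     A1 + p *: A2 \in unitmx /\
     sout A1 A2 B C p = Phi0 + \sum_(i < n) (p - nu i)^-1 *: Phi i) ->
  injective lam -> (forall j, ~~ (a <= lam j <= b)) ->
  (forall p, a <= p <= b ->
     Ah1 + p *: Ah2 \in unitmx /\
     sout Ah1 Ah2 Bh Ch p = \sum_(j < r) (p - lam j)^-1 *: (c j *m (bv j)^T)) ->
  L2_optimal a b (sout A1 A2 B C) Ah1 Ah2 Bh Ch ->
  forall k : 'I_r,
    Yfull a b Phi0 Phi nu (lam k) *m bv k = Yred a b lam c bv (lam k) *m bv k /\
    (c k)^T *m Yfull a b Phi0 Phi nu (lam k) = (c k)^T *m Yred a b lam c bv (lam k) /\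
    (c k)^T *m derive1 (Yfull a b Phi0 Phi nu) (lam k) *m bv k =
    (c k)^T *m derive1 (Yred a b lam c bv) (lam k) *m bv k.
Proof.
(* The poles need not be distinct. *)
move=> ab _ nu_out y_pr _ lam_out yh_pr opt k.
have yh_eq p : a <= p <= b -> sout Ah1 Ah2 Bh Ch p = residue_model lam c bv p.
  by move=> /yh_pr[_ ->]; rewrite /residue_model /pole_residue add0r.
have opt_pr := L2_optimal_residue_model nu_out lam_out (fun p pab => (y_pr p pab).2) yh_eq opt.
have ol := lam_out k.
split; [|split]; apply/eqP; rewrite -subr_eq0.
- by rewrite -mulmxBl Y_sub_cauchy //; apply/eqP; exact: residual_cauchy_mulmx.
- by rewrite -mulmxBr Y_sub_cauchy //; apply/eqP; exact: residual_cauchy_trmx.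
- by rewrite -mulmxBl -mulmxBr derive1_Y_sub //; apply/eqP; exact: residual_cauchy2_form.
Qed.
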